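(* For the symmetric walk started at $X_0=[\alpha N]$ with $\alpha\in(0,1)$, $$\lim_{N\to\infty}\frac{E_{[\alpha N]}[R_N]}{N}=\int_0^1\beta\,g_\alpha(\beta)\,d\beta=-\alpha\log\alpha-(1-\alpha)\log(1-\alpha).$$ Here $g_\alpha$ is the density defined in the context. The right-hand side is the entropy of the exit distribution: in the limit the walk exits at $0$ with probability $1-\alpha$ and at $N$ with probability $\alpha$. The maximum value, $\log 2$, is attained at $\alpha=1/2$.
   Context: Fix $N\ge2$ and let $\mathcal T_N=\{0,1,\dots,N\}$. Let $(X_n)_{n\ge0}$ be the symmetric nearest-neighbour random walk on $\mathcal T_N$: each step is $\pm1$ with probability $1/2$ each, and the walk is stopped the first time it is at $0$ or $N$. $P_x$ and $E_x$ denote probability and expectation with $X_0=x$. Let $T_a=\inf\{n\ge1:X_n=a\}$ and $\tau_N=T_0\wedge T_N$. Let $G(y)=\sum_{k=0}^{\tau_N}\mathbf 1\{X_k=y\}$, and let the range be $R_N=\#\{y\in\mathcal T_N:G(y)\ge1\}$. $[\cdot]$ is the integer part. With $a=\alpha\wedge(1-\alpha)$ and $b=\alpha\vee(1-\alpha)$, the density $g_\alpha$ is given by $g_\alpha(\beta)=a/\beta^2$ for $a<\beta<b$, $g_\alpha(\beta)=1/\beta^2$ for $b\le\beta\le1$, and $g_\alpha(\beta)=0$ otherwise. *)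

From Stdlib Require Import Reals Lra Lia ZArith Arith List.
Import ListNotations.
Open Scope R_scope.

(* Returns the list of visited positions X_0, X_1, ..., X_{min(|s|, tau_N)}. *)
Fixpoint traj (N x : nat) (s : list bool) : list nat :=
  x :: (if (Nat.eqb x 0 || Nat.eqb x N)%bool then []
        else match s with
             | [] => []
             | b :: s' => traj N (if b then S x else Nat.pred x) s'
             end).

Definition range_of (N : nat) (p : list nat) : nat :=
  length (filter (fun y => existsb (Nat.eqb y) p) (seq 0 (S N))).

(* All step sequences of length n (each has probability (1/2)^n). *)
Fixpoint all_steps (n : nat) : list (list bool) :=
  match n with
  | O => [ [] ]
  | S m => map (cons true) (all_steps m) ++ map (cons false) (all_steps m)
  end.

(* E_x[ R_N^{(n)} ], the expected range of the walk observed up to time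
   min(n, tau_N). *)
Definition exp_range_trunc (N x n : nat) : R :=
  fold_right Rplus 0
    (map (fun s => (/ 2) ^ n * INR (range_of N (traj N x s))) (all_steps n)).

(* E_x[R_N] is the limit as n -> infinity of the truncated expectations
   (monotone convergence; tau_N < infinity a.s.). *)
Definition is_exp_range (N x : nat) (l : R) : Prop :=
  Un_cv (fun n => exp_range_trunc N x n) l.

Definition floorN (t : R) : nat := Z.to_nat (Int_part t).

Definition g_alpha (alpha beta : R) : R :=
  let a := Rmin alpha (1 - alpha) in
  let b := Rmax alpha (1 - alpha) in
  if Rlt_dec a beta then
    (if Rlt_dec beta b then a / beta ^ 2
     else if Rle_dec beta 1 then 1 / beta ^ 2 else 0)
  else 0.

Definition entropy (alpha : R) : R :=
  - alpha * ln alpha - (1 - alpha) * ln (1 - alpha).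

(* The range is a sum of visit indicators, so E_x[R_N] = sum_y P_x(y is visited before tau_N).
   As a function of the start x, this hitting probability is harmonic inside the interval, equal
   to 1 at y and to 0 at the endpoint beyond y, hence linear: x/y for x <= y, (N-x)/(N-y) for
   x >= y.  Summing, E_x[R_N] = 1 + x (H_N - H_x) + (N-x) (H_N - H_{N-x}) with harmonic numbers
   H_k, and comparing these with logarithms at x = [alpha N] yields the entropy in the limit. *)

From Stdlib Require Import Reals Lra Lia ZArith Arith List.
From Coquelicot Require Import Coquelicot.
Import ListNotations.
Open Scope R_scope.

Definition sumR (l : list R) : R := fold_right Rplus 0 l.

Lemma sumR_app (l1 l2 : list R) : sumR (l1 ++ l2) = sumR l1 + sumR l2.
Proof. induction l1 as [|a l1 IH]; simpl; [lra|]. unfold sumR in *; rewrite IH; ring. Qed.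

Lemma sumR_map_scal {A : Type} (c : R) (h : A -> R) (l : list A) :
  sumR (map (fun s => c * h s) l) = c * sumR (map h l).
Proof. induction l as [|a l IH]; simpl; [ring|]. unfold sumR in *; simpl; rewrite IH; ring. Qed.

Definition expect (n : nat) (f : list bool -> R) : R :=
  sumR (map (fun s => (/ 2) ^ n * f s) (all_steps n)).

Lemma expect_ext n f g : (forall s, f s = g s) -> expect n f = expect n g.
Proof. intros H; unfold expect; f_equal; apply map_ext; intros; rewrite H; reflexivity. Qed.

Lemma expect_0 f : expect 0 f = f [].
Proof. unfold expect; simpl; ring. Qed.

Lemma expect_S n f :
  expect (S n) f =
  / 2 * expect n (fun s => f (true :: s)) + / 2 * expect n (fun s => f (false :: s)).
Proof.
  unfold expect; simpl all_steps; rewrite map_app, sumR_app, !map_map, <- !sumR_map_scal.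
  f_equal; f_equal; apply map_ext; intros; simpl; ring.
Qed.

Lemma expect_const n c : expect n (fun _ => c) = c.
Proof. induction n as [|n IH]; [apply expect_0|]. rewrite expect_S, IH; field. Qed.

Lemma expect_le n f g : (forall s, f s <= g s) -> expect n f <= expect n g.
Proof.
  revert f g; induction n as [|n IH]; intros f g H; [rewrite !expect_0; apply H|].
  rewrite !expect_S.
  assert (Ht := IH (fun s => f (true :: s)) (fun s => g (true :: s)) (fun s => H _)).
  assert (Hf := IH (fun s => f (false :: s)) (fun s => g (false :: s)) (fun s => H _)).
  lra.
Qed.

Lemma expect_add n f g : expect n (fun s => f s + g s) = expect n f + expect n g.
Proof.
  revert f g; induction n as [|n IH]; intros f g; [rewrite !expect_0; reflexivity|].
  rewrite !expect_S, (IH (fun s => f (true :: s))), (IH (fun s => f (false :: s))). ring.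
Qed.

Lemma expect_sumR {A : Type} n (h : A -> list bool -> R) (ys : list A) :
  expect n (fun s => sumR (map (fun y => h y s) ys)) = sumR (map (fun y => expect n (h y)) ys).
Proof.
  induction ys as [|y ys IH]; simpl; [apply expect_const|].
  rewrite (expect_add n (h y) (fun s => sumR (map (fun y => h y s) ys))).
  unfold sumR in *; rewrite IH; reflexivity.
Qed.

Lemma traj_nil N x : traj N x [] = [x].
Proof. simpl; destruct (_ || _)%bool; reflexivity. Qed.

Lemma traj_absorbed N x s : (x = 0 \/ x = N)%nat -> traj N x s = [x].
Proof.
  intros Hx; destruct s; simpl; [destruct (_ || _)%bool; reflexivity|].
  destruct Hx as [-> | ->]; [reflexivity|]. rewrite Nat.eqb_refl, Bool.orb_true_r; reflexivity.
Qed.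

Lemma traj_interior N x b s : x <> 0%nat -> x <> N ->
  traj N x (b :: s) = x :: traj N (if b then S x else Nat.pred x) s.
Proof. intros H0 HN; simpl; apply Nat.eqb_neq in H0, HN; rewrite H0, HN; reflexivity. Qed.

Definition visits (N y x : nat) (s : list bool) : R :=
  if existsb (Nat.eqb y) (traj N x s) then 1 else 0.

Lemma visits_start N x s : visits N x x s = 1.
Proof. unfold visits; destruct s; simpl; rewrite Nat.eqb_refl; reflexivity. Qed.

Lemma visits_stopped N y x s : x <> y -> traj N x s = [x] -> visits N y x s = 0.
Proof.
  intros Hxy E; unfold visits; rewrite E; simpl.
  apply Nat.eqb_neq in Hxy; rewrite Nat.eqb_sym, Hxy; reflexivity.
Qed.

Lemma visits_interior N y x b s : x <> y -> x <> 0%nat -> x <> N ->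
  visits N y x (b :: s) = visits N y (if b then S x else Nat.pred x) s.
Proof.
  intros Hxy H0 HN; unfold visits; rewrite traj_interior by assumption; simpl.
  apply Nat.eqb_neq in Hxy; rewrite Nat.eqb_sym, Hxy; reflexivity.
Qed.

Definition hit_prob_trunc (N y n x : nat) : R := expect n (visits N y x).

Lemma exp_range_trunc_sum_hit N x n :
  exp_range_trunc N x n = sumR (map (fun y => hit_prob_trunc N y n x) (seq 0 (S N))).
Proof.
  change (exp_range_trunc N x n) with (expect n (fun s => INR (range_of N (traj N x s)))).
  unfold hit_prob_trunc; rewrite <- expect_sumR; apply expect_ext; intros s.
  unfold range_of, visits; generalize (seq 0 (S N)); intros ys.
  induction ys as [|y ys IH]; [reflexivity|]; simpl.
  destruct existsb; simpl length; [rewrite S_INR|]; unfold sumR in *; simpl; rewrite IH; ring.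
Qed.

Lemma hit_prob_trunc_start N n x : hit_prob_trunc N x n x = 1.
Proof. unfold hit_prob_trunc; rewrite <- (expect_const n 1); apply expect_ext, visits_start. Qed.

Lemma hit_prob_trunc_absorbed N y n x : x <> y -> (x = 0 \/ x = N)%nat ->
  hit_prob_trunc N y n x = 0.
Proof.
  intros Hxy Hx; unfold hit_prob_trunc; rewrite <- (expect_const n 0); apply expect_ext; intros s.
  apply visits_stopped, traj_absorbed; assumption.
Qed.

Lemma hit_prob_trunc_0 N y x : x <> y -> hit_prob_trunc N y 0 x = 0.
Proof.
  intros Hxy; unfold hit_prob_trunc; rewrite expect_0.
  apply visits_stopped, traj_nil; assumption.
Qed.

Lemma hit_prob_trunc_S N y n x : x <> y -> x <> 0%nat -> x <> N ->
  hit_prob_trunc N y (S n) x =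
  / 2 * hit_prob_trunc N y n (S x) + / 2 * hit_prob_trunc N y n (Nat.pred x).
Proof.
  intros; unfold hit_prob_trunc; rewrite expect_S.
  f_equal; f_equal; apply expect_ext; intros s; apply visits_interior; assumption.
Qed.

Lemma hit_prob_trunc_bounds N y n x : 0 <= hit_prob_trunc N y n x <= 1.
Proof.
  unfold hit_prob_trunc; rewrite <- (expect_const n 0) at 1; rewrite <- (expect_const n 1).
  split; apply expect_le; intros s; unfold visits; destruct existsb; lra.
Qed.

Lemma hit_prob_trunc_incr N y n x : hit_prob_trunc N y n x <= hit_prob_trunc N y (S n) x.
Proof.
  revert x; induction n as [|n IH]; intros x;
    (destruct (Nat.eq_dec x y) as [->|Hxy]; [rewrite !hit_prob_trunc_start; lra|]).
  - rewrite hit_prob_trunc_0 by assumption; apply hit_prob_trunc_bounds.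
  - destruct (Nat.eq_dec x 0) as [H0|H0]; [rewrite !hit_prob_trunc_absorbed by auto; lra|].
    destruct (Nat.eq_dec x N) as [HN|HN]; [rewrite !hit_prob_trunc_absorbed by auto; lra|].
    rewrite (hit_prob_trunc_S N y (S n)), (hit_prob_trunc_S N y n) by assumption.
    assert (Hr := IH (S x)); assert (Hl := IH (Nat.pred x)); lra.
Qed.

Definition hit_prob (N y x : nat) : R := real (Lim_seq (fun n => hit_prob_trunc N y n x)).

Lemma is_lim_seq_hit_prob N y x : is_lim_seq (fun n => hit_prob_trunc N y n x) (hit_prob N y x).
Proof.
  assert (Hex : ex_finite_lim_seq (fun n => hit_prob_trunc N y n x)).
  { apply ex_finite_lim_seq_incr with 1; intros n;
      [apply hit_prob_trunc_incr|apply hit_prob_trunc_bounds]. }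
  unfold hit_prob; destruct Hex as [l Hl]; rewrite (is_lim_seq_unique _ _ Hl); exact Hl.
Qed.

Lemma hit_prob_start N x : hit_prob N x x = 1.
Proof.
  unfold hit_prob; rewrite (Lim_seq_ext _ (fun _ => 1)), Lim_seq_const; [reflexivity|].
  intros; apply hit_prob_trunc_start.
Qed.

Lemma hit_prob_absorbed N y x : x <> y -> (x = 0 \/ x = N)%nat -> hit_prob N y x = 0.
Proof.
  intros; unfold hit_prob; rewrite (Lim_seq_ext _ (fun _ => 0)), Lim_seq_const; [reflexivity|].
  intros; apply hit_prob_trunc_absorbed; assumption.
Qed.

Lemma hit_prob_step N y x : x <> y -> x <> 0%nat -> x <> N ->
  hit_prob N y x = / 2 * hit_prob N y (S x) + / 2 * hit_prob N y (Nat.pred x).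
Proof.
  intros Hxy H0 HN; unfold hit_prob at 1; rewrite <- Lim_seq_incr_1.
  rewrite (Lim_seq_ext _ _ (fun n => hit_prob_trunc_S N y n x Hxy H0 HN)).
  rewrite (is_lim_seq_unique _ _ (is_lim_seq_plus' _ _ _ _
    (is_lim_seq_mult' _ _ _ _ (is_lim_seq_const (/ 2)) (is_lim_seq_hit_prob N y (S x)))
    (is_lim_seq_mult' _ _ _ _ (is_lim_seq_const (/ 2)) (is_lim_seq_hit_prob N y (Nat.pred x))))).
  reflexivity.
Qed.

Lemma harmonic_interp_linear (h : nat -> R) (m : nat) : (0 < m)%nat ->
  h 0%nat = 0 -> h m = 1 ->
  (forall k, (0 < k < m)%nat -> h k = / 2 * h (S k) + / 2 * h (Nat.pred k)) ->
  forall k, (k <= m)%nat -> h k = INR k / INR m.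
Proof.
  intros Hm H0 Hm1 Hh.
  assert (Hlin : forall k, (k <= m)%nat -> h k = INR k * h 1%nat).
  { assert (Hpair : forall k, (S k <= m)%nat ->
      h k = INR k * h 1%nat /\ h (S k) = INR (S k) * h 1%nat).
    { induction k as [|k IH]; intros Hk; [split; simpl; [rewrite H0|]; ring|].
      destruct IH as [Hk0 Hk1]; [lia|]; split; [exact Hk1|].
      assert (E := Hh (S k) ltac:(lia)); simpl Nat.pred in E.
      rewrite !S_INR in *; rewrite Hk0, Hk1 in E; lra. }
    intros k Hk; destruct (Nat.eq_dec k m) as [->|Hne]; [|apply Hpair; lia].
    destruct m as [|m]; [lia|]; apply Hpair; lia. }
  assert (Hmpos : 0 < INR m) by (apply lt_0_INR; lia).
  assert (Hh1 : h 1%nat = / INR m).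
  { assert (E := Hlin m (le_n m)); rewrite Hm1 in E.
    apply (Rmult_eq_reg_l (INR m)); [rewrite <- E; field|]; lra. }
  intros k Hk; rewrite Hlin, Hh1 by assumption; field; lra.
Qed.

Definition hit_prob_formula (N y x : nat) : R :=
  if (x =? y)%nat then 1 else if (x <? y)%nat then INR x / INR y else INR (N - x) / INR (N - y).

Lemma hit_prob_eq N y x : (x <= N)%nat -> (y <= N)%nat -> hit_prob N y x = hit_prob_formula N y x.
Proof.
  intros Hx Hy; unfold hit_prob_formula.
  destruct (Nat.eqb_spec x y) as [->|Hxy]; [apply hit_prob_start|].
  destruct (Nat.ltb_spec x y) as [Hlt|Hge].
  - apply (harmonic_interp_linear (hit_prob N y) y); try lia.
    + apply hit_prob_absorbed; lia.
    + apply hit_prob_start.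
    + intros k Hk; apply hit_prob_step; lia.
  - (* reflect the interval: k |-> N - k turns hitting y from above into the first case *)
    transitivity ((fun k => hit_prob N y (N - k)) (N - x)%nat); [cbv beta; f_equal; lia|].
    apply (harmonic_interp_linear (fun k => hit_prob N y (N - k)) (N - y)); try lia.
    + rewrite Nat.sub_0_r; apply hit_prob_absorbed; lia.
    + replace (N - (N - y))%nat with y by lia; apply hit_prob_start.
    + intros k Hk; cbv beta; rewrite hit_prob_step by lia.
      replace (S (N - k)) with (N - Nat.pred k)%nat by lia.
      replace (Nat.pred (N - k)) with (N - S k)%nat by lia; ring.
Qed.

Lemma is_lim_seq_sumR {A : Type} (u : nat -> A -> R) (l : A -> R) (ys : list A) :
  (forall y, In y ys -> is_lim_seq (fun n => u n y) (l y)) ->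
  is_lim_seq (fun n => sumR (map (u n) ys)) (sumR (map l ys)).
Proof.
  induction ys as [|y ys IH]; intros H; simpl; [apply is_lim_seq_const|].
  apply is_lim_seq_plus'; [apply H; left; reflexivity|].
  apply IH; intros; apply H; right; assumption.
Qed.

Definition harmonic_block (u m : nat) : R := sumR (map (fun k => / INR k) (seq (S u) m)).

Definition expected_range (N x : nat) : R :=
  1 + INR x * harmonic_block x (N - x) + INR (N - x) * harmonic_block (N - x) x.

Lemma sumR_map_seq_reflect (g : nat -> R) N x : (x <= N)%nat ->
  sumR (map (fun y => g (N - y)%nat) (seq 0 x)) = sumR (map g (seq (S (N - x)) x)).
Proof.
  induction x as [|x IH]; intros Hx; [reflexivity|].
  rewrite seq_S, map_app, sumR_app, IH by lia.
  replace (S (N - S x)) with (N - x)%nat by lia; simpl; unfold sumR; simpl; ring.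
Qed.

Lemma sumR_hit_prob_formula N x : (x <= N)%nat ->
  sumR (map (fun y => hit_prob_formula N y x) (seq 0 (S N))) = expected_range N x.
Proof.
  intros Hx; replace (S N) with (x + S (N - x))%nat by lia.
  rewrite seq_app, map_app, sumR_app; simpl (seq (0 + x) _); simpl map.
  unfold hit_prob_formula at 2; rewrite Nat.eqb_refl.
  rewrite (map_ext_in _ (fun y => INR (N - x) * / INR (N - y))).
  2:{ intros y Hy; apply in_seq in Hy.
      unfold hit_prob_formula.
      destruct (Nat.eqb_spec x y), (Nat.ltb_spec x y); try lia; reflexivity. }
  rewrite (map_ext_in (fun y => hit_prob_formula N y x) (fun y => INR x * / INR y)).
  2:{ intros y Hy; apply in_seq in Hy.
      unfold hit_prob_formula.
      destruct (Nat.eqb_spec x y), (Nat.ltb_spec x y); try lia; reflexivity. }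
  unfold expected_range, harmonic_block.
  rewrite <- (sumR_map_seq_reflect (fun k => / INR k)) by assumption.
  rewrite <- !sumR_map_scal; simpl; ring.
Qed.

Lemma is_exp_range_expected_range N x : (x <= N)%nat -> is_exp_range N x (expected_range N x).
Proof.
  intros Hx; apply is_lim_seq_Reals.
  rewrite <- sumR_hit_prob_formula by assumption.
  apply (is_lim_seq_ext (fun n => sumR (map (fun y => hit_prob_trunc N y n x) (seq 0 (S N))))).
  { intros n; rewrite exp_range_trunc_sum_hit; reflexivity. }
  apply is_lim_seq_sumR; intros y Hy; apply in_seq in Hy.
  rewrite <- hit_prob_eq by lia; apply is_lim_seq_hit_prob.
Qed.

Lemma ln_le_sub1 t : 0 < t -> ln t <= t - 1.
Proof.
  intros Ht; rewrite <- (ln_exp (t - 1)).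
  apply ln_le; [exact Ht|]; pose proof (exp_ineq1_le (t - 1)); lra.
Qed.

Lemma ln_diff_bounds a b : 0 < a -> a <= b -> (b - a) / b <= ln b - ln a <= (b - a) / a.
Proof.
  intros Ha Hab; split.
  - assert (E := ln_le_sub1 (a / b) ltac:(apply Rdiv_lt_0_compat; lra)).
    rewrite ln_div in E by lra.
    replace (a / b - 1) with (- ((b - a) / b)) in E by (field; lra); lra.
  - assert (E := ln_le_sub1 (b / a) ltac:(apply Rdiv_lt_0_compat; lra)).
    rewrite ln_div in E by lra.
    replace (b / a - 1) with ((b - a) / a) in E by (field; lra); lra.
Qed.

Lemma harmonic_block_S u m : harmonic_block u (S m) = harmonic_block u m + / (INR u + INR m + 1).
Proof.
  unfold harmonic_block; rewrite seq_S, map_app, sumR_app.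
  change (sumR (map _ [(S u + m)%nat])) with (/ INR (S u + m) + 0).
  rewrite plus_INR, S_INR; replace (INR u + 1 + INR m) with (INR u + INR m + 1) by ring; ring.
Qed.

(* Comparison of the sum with the integral of 1/t over [u, u+m] and [u+1, u+m+1]. *)
Lemma harmonic_block_ln_bounds u m : (1 <= u)%nat ->
  ln (INR u + INR m + 1) - ln (INR u + 1) <= harmonic_block u m <= ln (INR u + INR m) - ln (INR u).
Proof.
  intros Hu; assert (Hu1 : 1 <= INR u) by (apply (le_INR 1); exact Hu).
  induction m as [|m IH].
  - unfold harmonic_block; simpl; unfold sumR; simpl; rewrite !Rplus_0_r; lra.
  - rewrite harmonic_block_S, S_INR.
    assert (Hm := pos_INR m).
    assert (Lo := ln_diff_bounds (INR u + INR m + 1) (INR u + INR m + 1 + 1) ltac:(lra) ltac:(lra)).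
    assert (Up := ln_diff_bounds (INR u + INR m) (INR u + INR m + 1) ltac:(lra) ltac:(lra)).
    replace (INR u + INR m + 1 + 1 - (INR u + INR m + 1)) with 1 in Lo by ring.
    replace (INR u + INR m + 1 - (INR u + INR m)) with 1 in Up by ring.
    replace (INR u + (INR m + 1) + 1) with (INR u + INR m + 1 + 1) by ring.
    replace (INR u + (INR m + 1)) with (INR u + INR m + 1) by ring.
    unfold Rdiv in Lo, Up; rewrite Rmult_1_l in Lo, Up; lra.
Qed.

Lemma ratio_harmonic_block_bounds u N : (1 <= u <= N)%nat ->
  let v := INR u / INR N in
  - v * ln (v + / INR N) <= v * harmonic_block u (N - u) <= - v * ln v.
Proof.
  intros Hu v.
  assert (Hu1 : 1 <= INR u) by (apply (le_INR 1); lia).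
  assert (HuN : INR u <= INR N) by (apply le_INR; lia).
  assert (Hv : 0 < v) by (apply Rdiv_lt_0_compat; lra).
  destruct (harmonic_block_ln_bounds u (N - u) ltac:(lia)) as [Lo Up].
  rewrite minus_INR in Lo, Up by lia.
  replace (INR u + (INR N - INR u)) with (INR N) in Lo, Up by ring.
  replace (v + / INR N) with ((INR u + 1) / INR N) by (unfold v; field; lra).
  unfold v; rewrite !ln_div by lra; fold v.
  assert (ln (INR N) < ln (INR N + 1)) by (apply ln_increasing; lra).
  split.
  - replace (- v * (ln (INR u + 1) - ln (INR N))) with (v * (ln (INR N) - ln (INR u + 1))) by ring.
    apply Rmult_le_compat_l; lra.
  - replace (- v * (ln (INR u) - ln (INR N))) with (v * (ln (INR N) - ln (INR u))) by ring.
    apply Rmult_le_compat_l; lra.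
Qed.

Lemma is_lim_seq_inv_INR : is_lim_seq (fun n => / INR n) 0.
Proof. exact (is_lim_seq_inv _ _ is_lim_seq_INR ltac:(discriminate)). Qed.

Lemma is_lim_seq_ln (u : nat -> R) l : 0 < l ->
  is_lim_seq u l -> is_lim_seq (fun n => ln (u n)) (ln l).
Proof.
  intros Hl; apply is_lim_seq_continuous.
  apply derivable_continuous_pt; exists (/ l); apply derivable_pt_lim_ln, Hl.
Qed.

Lemma is_lim_seq_ratio_harmonic_block (x : nat -> nat) c : 0 < c ->
  eventually (fun N => 1 <= x N <= N)%nat ->
  is_lim_seq (fun N => INR (x N) / INR N) c ->
  is_lim_seq (fun N => INR (x N) / INR N * harmonic_block (x N) (N - x N)) (- c * ln c).
Proof.
  intros Hc Hx Hv.
  assert (Hnv : is_lim_seq (fun N => - (INR (x N) / INR N)) (- c))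
    by exact (proj1 (is_lim_seq_opp _ _) Hv).
  apply is_lim_seq_le_le_loc with
    (u := fun N => - (INR (x N) / INR N) * ln (INR (x N) / INR N + / INR N))
    (w := fun N => - (INR (x N) / INR N) * ln (INR (x N) / INR N)).
  - destruct Hx as [N0 HN0]; exists N0; intros N HN; apply ratio_harmonic_block_bounds, HN0, HN.
  - apply is_lim_seq_mult'; [exact Hnv|]; apply is_lim_seq_ln; [exact Hc|].
    rewrite <- (Rplus_0_r c); apply is_lim_seq_plus'; [exact Hv|apply is_lim_seq_inv_INR].
  - apply is_lim_seq_mult'; [exact Hnv|]; apply is_lim_seq_ln; assumption.
Qed.

Lemma floorN_spec t : 0 <= t -> INR (floorN t) <= t < INR (floorN t) + 1.
Proof.
  intros Ht; destruct (base_Int_part t) as [Hle Hgt].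
  assert (Hz : (0 <= Int_part t)%Z).
  { assert (Hneg : IZR (-1) < IZR (Int_part t)) by (simpl; lra); apply lt_IZR in Hneg; lia. }
  unfold floorN; rewrite INR_IZR_INZ, Z2Nat.id by exact Hz; lra.
Qed.

Section FloorScaling.
Variable alpha : R.
Hypothesis Ha : 0 < alpha < 1.

Let x (N : nat) : nat := floorN (alpha * INR N).

Lemma floor_scaled_bounds N : INR (x N) <= alpha * INR N < INR (x N) + 1.
Proof. apply floorN_spec; pose proof (pos_INR N); nra. Qed.

Lemma floor_scaled_le N : (x N <= N)%nat.
Proof. apply INR_le; pose proof (floor_scaled_bounds N); pose proof (pos_INR N); nra. Qed.

Lemma floor_scaled_interior : eventually (fun N => 1 <= x N /\ x N < N)%nat.
Proof.
  destruct (archimed_cor1 alpha (proj1 Ha)) as [N1 [HN1 HN1pos]].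
  exists N1; intros N HN.
  assert (HN1R : 0 < INR N1) by (apply lt_0_INR; lia).
  assert (INR N1 <= INR N) by (apply le_INR; lia).
  assert (1 < alpha * INR N1)
    by (apply (Rmult_lt_compat_r (INR N1)) in HN1; [rewrite Rinv_l in HN1|]; lra).
  destruct (floor_scaled_bounds N); split.
  - apply (INR_lt 0); simpl; nra.
  - apply INR_lt; nra.
Qed.

Lemma is_lim_seq_floor_scaled_ratio : is_lim_seq (fun N => INR (x N) / INR N) alpha.
Proof.
  apply is_lim_seq_le_le_loc with (u := fun N => alpha - / INR N) (w := fun _ => alpha).
  - exists 1%nat; intros N HN.
    assert (0 < INR N) by (apply lt_0_INR; lia).
    destruct (floor_scaled_bounds N); split.
    + apply (Rmult_le_reg_r (INR N)); [lra|].
      replace ((alpha - / INR N) * INR N) with (alpha * INR N - 1) by (field; lra).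
      replace (INR (x N) / INR N * INR N) with (INR (x N)) by (field; lra); lra.
    + apply (Rmult_le_reg_r (INR N)); [lra|].
      replace (INR (x N) / INR N * INR N) with (INR (x N)) by (field; lra); lra.
  - rewrite <- (Rminus_0_r alpha) at 1.
    apply is_lim_seq_minus'; [apply is_lim_seq_const|apply is_lim_seq_inv_INR].
  - apply is_lim_seq_const.
Qed.

Lemma is_lim_seq_expected_range_ratio :
  is_lim_seq (fun N => expected_range N (x N) / INR N) (entropy alpha).
Proof.
  destruct floor_scaled_interior as [N0 HN0].
  assert (Hy : is_lim_seq (fun N => INR (N - x N) / INR N) (1 - alpha)).
  { apply (is_lim_seq_ext_loc (fun N => 1 - INR (x N) / INR N)).
    - exists (S N0); intros N HN; destruct (HN0 N ltac:(lia)).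
      rewrite minus_INR by lia; field; apply not_0_INR; lia.
    - apply is_lim_seq_minus'; [apply is_lim_seq_const|apply is_lim_seq_floor_scaled_ratio]. }
  assert (Hblock_x := is_lim_seq_ratio_harmonic_block x alpha (proj1 Ha)
    ltac:(exists N0; intros N HN; destruct (HN0 N HN); lia) is_lim_seq_floor_scaled_ratio).
  assert (Hblock_y := is_lim_seq_ratio_harmonic_block (fun N => N - x N)%nat (1 - alpha) ltac:(lra)
    ltac:(exists N0; intros N HN; destruct (HN0 N HN); lia) Hy).
  apply (is_lim_seq_ext_loc (fun N => / INR N
    + INR (x N) / INR N * harmonic_block (x N) (N - x N)
    + INR (N - x N) / INR N * harmonic_block (N - x N) (N - (N - x N)))).
  - exists (S N0); intros N HN; destruct (HN0 N ltac:(lia)).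
    replace (N - (N - x N))%nat with (x N) by lia.
    unfold expected_range; field; apply not_0_INR; lia.
  - replace (entropy alpha) with (0 + - alpha * ln alpha + - (1 - alpha) * ln (1 - alpha))
      by (unfold entropy; ring).
    apply is_lim_seq_plus'; [apply is_lim_seq_plus'; [apply is_lim_seq_inv_INR|]|]; assumption.
Qed.

End FloorScaling.

Lemma is_RInt_derive_interior (F f G : R -> R) a b : a <= b ->
  (forall t, a <= t <= b -> is_derive G t (f t)) ->
  (forall t, a <= t <= b -> continuous f t) ->
  (forall t, a < t < b -> f t = F t) ->
  is_RInt F a b (G b - G a).
Proof.
  intros Hab Hd Hc HF.
  apply is_RInt_ext with f; [rewrite Rmin_left, Rmax_right by exact Hab; exact HF|].
  apply (is_RInt_derive G f); rewrite Rmin_left, Rmax_right by exact Hab; assumption.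
Qed.

Lemma is_derive_scal_ln c t : 0 < t -> is_derive (fun s => c * ln s) t (c / t).
Proof. intros Ht; apply (is_derive_scal ln t c (/ t)), is_derive_ln, Ht. Qed.

Lemma continuous_scal_inv c t : 0 < t -> continuous (fun s => c / s) t.
Proof. intros Ht; apply (@ex_derive_continuous R_AbsRing R_NormedModule); auto_derive; lra. Qed.

Section EntropyIntegral.
Variable alpha : R.
Hypothesis Ha : 0 < alpha < 1.

Let a := Rmin alpha (1 - alpha).
Let b := Rmax alpha (1 - alpha).

Lemma min_max_complement : 0 < a /\ a <= b /\ b < 1 /\ a + b = 1.
Proof. unfold a, b, Rmin, Rmax; destruct Rle_dec; lra. Qed.

Lemma g_alpha_low t : t <= a -> g_alpha alpha t = 0.
Proof. intros; unfold g_alpha; fold a b; destruct Rlt_dec; [lra|reflexivity]. Qed.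

Lemma g_alpha_mid t : a < t < b -> g_alpha alpha t = a / t ^ 2.
Proof. intros; unfold g_alpha; fold a b; do 2 (destruct Rlt_dec; [|lra]); reflexivity. Qed.

Lemma g_alpha_high t : a < t -> b <= t <= 1 -> g_alpha alpha t = 1 / t ^ 2.
Proof.
  intros; unfold g_alpha; fold a b; destruct Rlt_dec; [|lra].
  destruct Rlt_dec; [lra|]; destruct Rle_dec; [reflexivity|lra].
Qed.

(* On each piece beta g_alpha(beta) is 0, a/beta or 1/beta, with antiderivatives 0, a ln and ln. *)
Lemma is_RInt_beta_g_alpha : is_RInt (fun beta => beta * g_alpha alpha beta) 0 1 (entropy alpha).
Proof.
  destruct min_max_complement as [Ha0 [Hab [Hb1 Hsum]]].
  assert (I1 : is_RInt (fun beta => beta * g_alpha alpha beta) 0 a (0 - 0)).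
  { apply (is_RInt_derive_interior _ (fun _ => 0) (fun _ => 0)); [lra| | |].
    - intros; apply (@is_derive_const R_AbsRing R_NormedModule).
    - intros; apply continuous_const.
    - intros t Ht; rewrite g_alpha_low by lra; ring. }
  assert (I2 : is_RInt (fun beta => beta * g_alpha alpha beta) a b (a * ln b - a * ln a)).
  { apply (is_RInt_derive_interior _ (fun t => a / t) (fun t => a * ln t)); [exact Hab| | |].
    - intros t Ht; apply is_derive_scal_ln; lra.
    - intros t Ht; apply continuous_scal_inv; lra.
    - intros t Ht; rewrite g_alpha_mid by lra; field; lra. }
  assert (I3 : is_RInt (fun beta => beta * g_alpha alpha beta) b 1 (1 * ln 1 - 1 * ln b)).
  { apply (is_RInt_derive_interior _ (fun t => 1 / t) (fun t => 1 * ln t)); [lra| | |].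
    - intros t Ht; apply is_derive_scal_ln; lra.
    - intros t Ht; apply continuous_scal_inv; lra.
    - intros t Ht; rewrite g_alpha_high by lra; field; lra. }
  assert (I := is_RInt_Chasles _ _ _ _ _ _ (is_RInt_Chasles _ _ _ _ _ _ I1 I2) I3).
  replace (entropy alpha) with (plus (plus (0 - 0) (a * ln b - a * ln a)) (1 * ln 1 - 1 * ln b));
    [exact I|].
  rewrite ln_1; unfold plus; simpl; unfold entropy.
  revert Hsum; unfold a, b, Rmin, Rmax; destruct Rle_dec; intros.
  - ring.
  - replace (1 - (1 - alpha)) with alpha by ring; ring.
Qed.

End EntropyIntegral.

Lemma entropy_le_ln2 alpha : 0 < alpha < 1 -> entropy alpha <= ln 2.
Proof.
  intros Ha.
  (* ln (1/(2t)) <= 1/(2t) - 1, multiplied by t *)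
  assert (Hterm : forall t, 0 < t -> - t * ln t <= ln 2 * t + (/ 2 - t)).
  { intros t Ht; assert (E := ln_le_sub1 (/ (2 * t)) ltac:(apply Rinv_0_lt_compat; lra)).
    rewrite ln_Rinv, ln_mult in E by lra.
    assert (E2 : t * (- (ln 2 + ln t)) <= t * (/ (2 * t) - 1)) by (apply Rmult_le_compat_l; lra).
    replace (t * (/ (2 * t) - 1)) with (/ 2 - t) in E2 by (field; lra); lra. }
  unfold entropy; pose proof (Hterm alpha ltac:(lra)).
  pose proof (Hterm (1 - alpha) ltac:(lra)); lra.
Qed.

Lemma entropy_half : entropy (1 / 2) = ln 2.
Proof.
  unfold entropy; replace (1 - 1 / 2) with (/ 2) by field; replace (1 / 2) with (/ 2) by field.
  rewrite ln_Rinv by lra; field.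
Qed.

Theorem mainTheorem4 (alpha : R) (Ha : 0 < alpha < 1) :
  (forall N : nat, (2 <= N)%nat -> exists l, is_exp_range N (floorN (alpha * INR N)) l) /\
  (forall e : nat -> R,
     (forall N : nat, (2 <= N)%nat -> is_exp_range N (floorN (alpha * INR N)) (e N)) ->
     Un_cv (fun N => e N / INR N) (entropy alpha)) /\
  (exists pr : Riemann_integrable (fun beta => beta * g_alpha alpha beta) 0 1,
     RiemannInt pr = entropy alpha) /\
  entropy alpha <= ln 2 /\ entropy (1/2) = ln 2.
Proof.
  split; [|split; [|split]].
  - intros N _; eexists; apply is_exp_range_expected_range, (floor_scaled_le alpha Ha).
  - intros e He; apply is_lim_seq_Reals.
    apply (is_lim_seq_ext_loc (fun N => expected_range N (floorN (alpha * INR N)) / INR N));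
      [|apply is_lim_seq_expected_range_ratio, Ha].
    exists 2%nat; intros N HN; f_equal.
    apply (UL_sequence (exp_range_trunc N (floorN (alpha * INR N)))); [|exact (He N HN)].
    apply is_exp_range_expected_range, floor_scaled_le, Ha.
  - assert (I := is_RInt_beta_g_alpha alpha Ha).
    exists (ex_RInt_Reals_0 _ _ _ (ex_intro _ _ I)).
    rewrite <- RInt_Reals; apply is_RInt_unique, I.
  - split; [apply entropy_le_ln2, Ha|apply entropy_half].
Qed.
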